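(* Let $2\leq d_1\leq d_2$ and let $X$ be a positive semidefinite matrix in $\mathcal{M}_{d_1}\otimes\mathcal{M}_{d_2}$, written as $X=\sum_{i,j=1}^{d_1}\ket{i}\bra{j}\otimes X_{ij}$ with blocks $X_{ij}\in\mathcal{M}_{d_2}$. If $\mathrm{SN}(X)=d_1$, then there exist distinct $k_1,k_2\in\{1,\ldots,d_1\}$ such that \[ Y=\sum_{s,t=1}^{2}\ket{s}\bra{t}\otimes X_{k_sk_t}\in\mathcal{M}_2\otimes\mathcal{M}_{d_2} \] is entangled.
   Context: $\mathcal{M}_d$: complex $d\times d$ matrices. A positive semidefinite $W\in\mathcal{M}_{a}\otimes\mathcal{M}_{b}$ is separable if it is a finite sum $\sum_i P_i\otimes Q_i$ with $P_i,Q_i$ positive semidefinite, and entangled otherwise. The Schmidt rank of $\ket{\psi}$ is the rank of $\mathrm{tr}_A\ket{\psi}\bra{\psi}$; for a nonzero positive semidefinite $W$, $\mathrm{SN}(W)$ is the minimum over decompositions $W=\sum_ip_i\ket{\psi_i}\bra{\psi_i}$ ($p_i>0$) of the maximal Schmidt rank of the $\ket{\psi_i}$. *)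

From mathcomp Require Import all_boot all_algebra.
From mathcomp Require Import reals.
From mathcomp Require Export complex mxtens.

Set Implicit Arguments.
Unset Strict Implicit.
Unset Printing Implicit Defensive.
Import GRing.Theory Num.Theory.
Local Open Scope ring_scope.

(* Kronecker convention: the basis vector |i> (x) |j> of C^a (x) C^b has
   index  mxtens_index (i, j) = i * b + j  in 'I_(a * b); tensmx is the
   Kronecker product A *t B. *)

Section Defs.
Variable R : realType.
Local Notation C := (R[i]).

Definition adj {m n} (A : 'M[C]_(m, n)) : 'M[C]_(n, m) := (map_mx Num.conj A)^T.

Definition psd {n} (A : 'M[C]_n) : Prop :=
  A = adj A /\ forall v : 'cV[C]_n, 0 <= (adj v *m A *m v) 0 0.

Definition separable {a b} (W : 'M[C]_(a * b)) : Prop :=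
  exists (N : nat) (P : 'I_N -> 'M[C]_a) (Q : 'I_N -> 'M[C]_b),
    (forall i, psd (P i) /\ psd (Q i)) /\ W = \sum_(i < N) tensmx (P i) (Q i).

Definition entangled {a b} (W : 'M[C]_(a * b)) : Prop :=
  psd W /\ ~ separable W.

Definition ptrA {a b} (W : 'M[C]_(a * b)) : 'M[C]_b :=
  \matrix_(k, l) \sum_(i < a) W (mxtens_index (i, k)) (mxtens_index (i, l)).

Definition schmidt_rank {a b} (psi : 'cV[C]_(a * b)) : nat :=
  \rank (@ptrA a b (psi *m adj psi)).

Definition SN_le {a b} (W : 'M[C]_(a * b)) (k : nat) : Prop :=
  exists (N : nat) (p : 'I_N -> C) (psi : 'I_N -> 'cV[C]_(a * b)),
    [/\ forall i, 0 < p i,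
        W = \sum_(i < N) p i *: (psi i *m adj (psi i)) &
        forall i, (@schmidt_rank a b (psi i) <= k)%N].

Definition SN_eq {a b} (W : 'M[C]_(a * b)) (k : nat) : Prop :=
  [/\ W != 0, @SN_le a b W k & forall k', @SN_le a b W k' -> (k <= k')%N].

(* Y = sum_{s,t} |s><t| (x) X_{k_s k_t}, where X_{ij} is the (i,j) block *)
Definition block2 {d1 d2} (X : 'M[C]_(d1 * d2)) (k1 k2 : 'I_d1) : 'M[C]_(2 * d2) :=
  let k (s : 'I_2) := if val s == 0%N then k1 else k2 in
  \matrix_(u, v)
    X (mxtens_index (k (mxtens_unindex u).1, (mxtens_unindex u).2))
      (mxtens_index (k (mxtens_unindex v).1, (mxtens_unindex v).2)).

End Defs.

(* Suppose the compression Y = E^* X E of X to the block span{|k1>,|k2>} (x) C^d2 were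
   separable.  As X is psd, the range of E^* X lies in that of Y, so for a Hermitian
   generalised inverse Y^- of Y there is the Schur-complement decomposition
   X = F Y F^* + N X N^*, with F = E + Q X E Y^-, N = Q (1 - X E Y^- E^* ) and Q the
   projection onto the complement of the block.  Since E^* F = 1 and E^* N = 0, the
   columns of F (A (x) B) restrict to product vectors on the block and the columns of N W
   vanish there; either way two rows of their d1 x d2 coefficient matrices are
   proportional, so their Schmidt rank is below d1.  Writing Y = sum (A A^* ) (x) (B B^* )
   and X = W W^* then exhibits SN(X) <= d1 - 1. *)

From mathcomp Require Import all_boot all_algebra.
From mathcomp Require Import reals spectral zify.
Set Implicit Arguments.
Unset Strict Implicit.
Unset Printing Implicit Defensive.
Import GRing.Theory Num.Theory Num.Def.
Local Open Scope ring_scope.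

Section Adjoint.
Variable R : realType.
Local Notation C := (R[i]).

Lemma adjE m n (A : 'M[C]_(m, n)) i j : adj A i j = (A j i)^*.
Proof. by rewrite !mxE. Qed.

Lemma adj_trmxC m n (A : 'M[C]_(m, n)) : adj A = (A ^t* )%sesqui.
Proof. by rewrite /adj map_trmx. Qed.

Lemma adjK m n (A : 'M[C]_(m, n)) : adj (adj A) = A.
Proof. by rewrite !adj_trmxC trmxCK. Qed.

Lemma adjM m n p (A : 'M[C]_(m, n)) (B : 'M[C]_(n, p)) :
  adj (A *m B) = adj B *m adj A.
Proof. by rewrite /adj map_mxM trmx_mul. Qed.

Lemma adjD m n (A B : 'M[C]_(m, n)) : adj (A + B) = adj A + adj B.
Proof. by rewrite /adj map_mxD linearD. Qed.

Lemma adjB m n (A B : 'M[C]_(m, n)) : adj (A - B) = adj A - adj B.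
Proof. by rewrite /adj map_mxB linearB. Qed.

Lemma adj1 n : adj (1%:M : 'M[C]_n) = 1%:M.
Proof. by rewrite /adj map_mx1 trmx1. Qed.

Lemma adj_tens m n p q (A : 'M[C]_(m, n)) (B : 'M[C]_(p, q)) :
  adj (A *t B) = adj A *t adj B.
Proof. by rewrite /adj map_mxT trmx_tens. Qed.

Lemma adj_diag_mx n (d : 'rV[C]_n) : adj (diag_mx d) = diag_mx (map_mx conjC d).
Proof. by rewrite /adj map_diag_mx tr_diag_mx. Qed.

Lemma hermitian_spectral n (A : 'M[C]_n) : A = adj A ->
  exists (P : 'M[C]_n) (d : 'rV[C]_n),
    P *m adj P = 1%:M /\ A = adj P *m diag_mx d *m P.
Proof.
move=> hA; have A_normal : A \is normalmx by apply/normalmxP; rewrite -adj_trmxC -hA.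
have := spectral_unitarymx A; have := orthomx_spectralP A_normal.
move: (spectralmx A) (spectral_diag A) => P d defA /unitarymxP PPt.
by exists P, d; rewrite invmx_unitary ?adj_trmxC in defA *; [|apply/unitarymxP].
Qed.

Lemma psd_factor n (A : 'M[C]_n) : psd A -> exists W : 'M[C]_n, A = W *m adj W.
Proof.
move=> [hA psdA]; have [P [d [PPt defA]]] := hermitian_spectral hA.
have d_ge0 j : 0 <= d 0 j.
  suff -> : d 0 j = (adj (col j (adj P)) *m A *m col j (adj P)) 0 0 by apply: psdA.
  have -> : adj (col j (adj P)) = row j P by apply/matrixP=> ? ?; rewrite !mxE conjCK.
  have PPtK m (M : 'M[C]_(m, n)) : M *m P *m adj P = M by rewrite -mulmxA PPt mulmx1.
  by rewrite rowE colE defA !mulmxA !PPtK -rowE -colE !mxE eqxx mulr1n.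
exists (adj P *m diag_mx (\row_j sqrtC (d 0 j))).
rewrite adjM adjK adj_diag_mx -mulmxA [diag_mx _ *m _]mulmxA mulmx_diag mulmxA {1}defA.
congr (_ *m diag_mx _ *m _); apply/rowP=> j; rewrite !mxE.
by rewrite -normCK ger0_norm ?sqrtC_ge0 // sqrtCK.
Qed.

Lemma mul_adj_eq0 m n (H : 'M[C]_(m, n)) : H *m adj H = 0 -> H = 0.
Proof.
move=> HHt0; apply/matrixP=> i j; rewrite mxE.
have /eqP := congr1 (fun M : 'M[C]_m => M i i) HHt0; rewrite !mxE.
under eq_bigr do rewrite adjE -normCK.
rewrite psumr_eq0 => [/allP/(_ j (mem_index_enum _))|k _]; last exact: exprn_ge0.
by rewrite expf_eq0 normr_eq0 => /eqP.
Qed.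

Lemma psd_congr n p (X : 'M[C]_n) (N : 'M[C]_(n, p)) : psd X -> psd (adj N *m X *m N).
Proof.
move=> [hX psdX]; split; first by rewrite !adjM adjK -hX mulmxA.
by move=> v; rewrite -!mulmxA !mulmxA -adjM -mulmxA.
Qed.

Lemma psd_mul_eq0 n p (X : 'M[C]_n) (M : 'M[C]_(n, p)) : psd X ->
  adj M *m X *m M = 0 -> X *m M = 0.
Proof.
move=> /psd_factor[W ->] MXM0.
have /mul_adj_eq0 MW0 : adj M *m W *m adj (adj M *m W) = 0.
  by rewrite adjM adjK !mulmxA -(mulmxA _ W).
have WtM0 : adj W *m M = 0 by rewrite -[LHS]adjK adjM adjK MW0 /adj map_mx0 trmx0.
by rewrite -mulmxA WtM0 mulmx0.
Qed.

Lemma hermitian_ginv n (Y : 'M[C]_n) : Y = adj Y ->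
  exists Yp : 'M[C]_n, adj Yp = Yp /\ Y *m Yp *m Y = Y.
Proof.
move=> hY; have : Y *m pinvmx Y *m Y = Y by apply: mulmxKpV.
move: (pinvmx Y) => Z YZY.
exists (adj Z *m Y *m Z); split; first by rewrite !adjM adjK -hY mulmxA.
have YZtY : Y *m adj Z *m Y = Y.
  have -> : Y *m adj Z *m Y = adj (Y *m Z *m Y) by rewrite !adjM -hY mulmxA.
  by rewrite YZY -hY.
by rewrite !mulmxA YZtY YZY.
Qed.

End Adjoint.

Section SchmidtNumber.
Variable R : realType.
Local Notation C := (R[i]).
Variables a b : nat.
Implicit Types (W : 'M[C]_(a * b)) (psi : 'cV[C]_(a * b)).

Lemma SN_le0 k : SN_le (0 : 'M[C]_(a * b)) k.
Proof. by exists 0%N, (fun=> 1), (fun=> 0); split=> [[]||[]] //; rewrite big_ord0. Qed.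

Lemma SN_leD k W1 W2 : SN_le W1 k -> SN_le W2 k -> SN_le (W1 + W2) k.
Proof.
move=> [N1 [p1 [psi1 [p1_gt0 -> sr1]]]] [N2 [p2 [psi2 [p2_gt0 -> sr2]]]].
pose p i := match split i with inl j => p1 j | inr j => p2 j end.
pose psi i := match split i with inl j => psi1 j | inr j => psi2 j end.
exists (N1 + N2)%N, p, psi; split=> [i|| i]; rewrite /p /psi.
- by case: (split i).
- by rewrite big_split_ord /=; congr (_ + _); apply: eq_bigr => i _;
    rewrite ?(unsplitK (inl i)) ?(unsplitK (inr i)).
- by case: (split i).
Qed.

Lemma SN_le_sum k I (r : seq I) (P : pred I) (F : I -> 'M[C]_(a * b)) :
  (forall i, P i -> SN_le (F i) k) -> SN_le (\sum_(i <- r | P i) F i) k.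
Proof. by move=> SN_F; elim/big_ind: _ => //; [apply: SN_le0 | apply: SN_leD]. Qed.

Lemma SN_le_mul_adj k p (H : 'M[C]_(a * b, p)) :
  (forall j, (schmidt_rank (col j H) <= k)%N) -> SN_le (H *m adj H) k.
Proof.
move=> srH; have -> : H *m adj H = \sum_j col j H *m adj (col j H).
  apply/matrixP=> x y; rewrite mxE summxE.
  by apply: eq_bigr => j _; rewrite !mxE big_ord1 !mxE.
apply: SN_le_sum => j _; exists 1%N, (fun=> 1), (fun=> col j H).
by split=> [_||_]; rewrite ?ltr01 ?big_ord1 ?scale1r.
Qed.

Definition coefmx psi : 'M[C]_(a, b) := \matrix_(i, l) psi (mxtens_index (i, l)) 0.

Lemma schmidt_rank_coefmx psi : (schmidt_rank psi <= \rank (coefmx psi))%N.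
Proof.
rewrite /schmidt_rank.
have -> : ptrA (psi *m adj psi) = (coefmx psi)^T *m map_mx conjC (coefmx psi).
  by apply/matrixP=> k l; rewrite !mxE; apply: eq_bigr => i _; rewrite !mxE big_ord1 !mxE.
by rewrite (leq_trans (mxrankM_maxl _ _)) ?mxrank_tr.
Qed.

Lemma rank_le_pred_of_ker m n (A : 'M[C]_(m, n)) (c : 'rV[C]_m) :
  c != 0 -> c *m A = 0 -> (\rank A <= m.-1)%N.
Proof.
move=> c_neq0 /sub_kermxP/mxrankS; rewrite rank_rV c_neq0 mxrank_ker.
by have := rank_leq_row A; lia.
Qed.

Lemma schmidt_rank_le_pred psi (k1 k2 : 'I_a) (al1 al2 : C) (be : 'I_b -> C) :
  k1 != k2 ->
  (forall l, psi (mxtens_index (k1, l)) 0 = al1 * be l) ->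
  (forall l, psi (mxtens_index (k2, l)) 0 = al2 * be l) ->
  (schmidt_rank psi <= a.-1)%N.
Proof.
move=> k12 psi1 psi2; apply: leq_trans (schmidt_rank_coefmx psi) _.
have row_coefmx k al : (forall l, psi (mxtens_index (k, l)) 0 = al * be l) ->
    delta_mx 0 k *m coefmx psi = al *: \row_l be l.
  by move=> psik; apply/rowP=> l; rewrite -rowE !mxE psik.
have e_neq0 k : delta_mx 0 k != 0 :> 'rV[C]_a.
  by apply/eqP=> /rowP/(_ k); rewrite !mxE !eqxx => /eqP; rewrite oner_eq0.
have [al1_0 | al1_neq0] := eqVneq al1 0.
  apply: (rank_le_pred_of_ker (e_neq0 k1)).
  by rewrite (row_coefmx _ _ psi1) al1_0 scale0r.
apply: (@rank_le_pred_of_ker _ _ _ (al2 *: delta_mx 0 k1 - al1 *: delta_mx 0 k2)).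
  apply/eqP=> /rowP/(_ k2); rewrite !mxE eqxx eq_sym (negbTE k12) eqxx mulr0 mulr1 sub0r.
  by move/eqP; rewrite oppr_eq0 (negbTE al1_neq0).
rewrite mulmxBl -!scalemxAl (row_coefmx _ _ psi1) (row_coefmx _ _ psi2).
by rewrite !scalerA mulrC subrr.
Qed.

End SchmidtNumber.

Section Schur.
Variable R : realType.
Local Notation C := (R[i]).
Variables (n m : nat) (X : 'M[C]_n) (E : 'M[C]_(n, m)) (Yp : 'M[C]_m).
Hypotheses (X_herm : adj X = X) (Yp_herm : adj Yp = Yp).
Local Notation Y := (adj E *m X *m E).
Local Notation Q := (1%:M - E *m adj E).
Local Notation G := (X *m E *m Yp).
Local Notation U := (X *m E *m Yp *m adj E *m X).
Hypothesis GY : G *m Y = X *m E.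

Lemma schur_decomposition :
  X = (E + Q *m G) *m Y *m adj (E + Q *m G)
      + Q *m (1%:M - G *m adj E) *m X *m adj (Q *m (1%:M - G *m adj E)).
Proof.
have Q_herm : adj Q = Q by rewrite adjB adj1 adjM adjK.
have G_adj : adj G = Yp *m adj E *m X by rewrite !adjM X_herm Yp_herm mulmxA.
have XEGt : X *m E *m adj G = U by rewrite G_adj !mulmxA.
have YGt : Y *m adj G = adj E *m X.
  by have := congr1 (@adj R _ _) GY; rewrite !adjM adjK X_herm -!mulmxA.
have PU : E *m adj E *m U = E *m adj E *m X.
  by rewrite -[RHS]mulmxA -YGt G_adj !mulmxA.
have QXE : Q *m (X *m E) = X *m E - E *m Y by rewrite mulmxBl mul1mx !mulmxA.
have first : (E + Q *m G) *m Y = X *m E.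
  by rewrite (mulmxDl E) -(mulmxA Q) GY QXE addrC subrK.
have mid : (1%:M - G *m adj E) *m X *m (1%:M - E *m adj G) = X - U.
  rewrite !(mulmxBl, mulmxBr, mul1mx, mulmx1) !mulmxA XEGt.
  have -> : U *m E *m adj G = G *m Y *m adj G by rewrite !mulmxA.
  by rewrite GY XEGt subrr subr0.
have QXU : Q *m (X - U) = X - U.
  by rewrite mulmxBl mul1mx mulmxBr PU subrr subr0.
have second : Q *m (1%:M - G *m adj E) *m X *m adj (Q *m (1%:M - G *m adj E)) = (X - U) *m Q.
  by rewrite adjM Q_herm adjB adj1 adjM adjK -QXU -mid !mulmxA.
rewrite first second adjD adjM Q_herm mulmxDr !mulmxA XEGt -addrA -mulmxDl.
by rewrite [U + _]addrC subrK -mulmxA -mulmxDr [_ + Q]addrC subrK mulmx1.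
Qed.

End Schur.

Section Compression.
Variable R : realType.
Local Notation C := (R[i]).
Variables (a b m : nat) (kappa : 'I_m -> 'I_a).
Hypothesis kappa_inj : injective kappa.

Definition compress_index (v : 'I_(m * b)) : 'I_(a * b) :=
  mxtens_index (kappa (mxtens_unindex v).1, (mxtens_unindex v).2).

Definition embedmx : 'M[C]_(a * b, m * b) := colsub compress_index 1%:M.
Local Notation E := embedmx.

Lemma compress_index_inj : injective compress_index.
Proof.
move=> u v /(congr1 (@mxtens_unindex a b)); rewrite !mxtens_indexK => eq_uv.
apply: (can_inj (@mxtens_unindexK m b)); move: eq_uv.
by case: (mxtens_unindex u) (mxtens_unindex v) => [u1 u2] [v1 v2] [/kappa_inj -> ->].
Qed.

Lemma mul_embedmxE p (A : 'M[C]_(p, a * b)) y v : (A *m E) y v = A y (compress_index v).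
Proof. by rewrite mulmx_colsub mulmx1 mxE. Qed.

Lemma adj_embedmx_mulE p (A : 'M[C]_(a * b, p)) u j :
  (adj E *m A) u j = A (compress_index u) j.
Proof.
have -> : adj E = rowsub compress_index 1%:M.
  by apply/matrixP=> ? ?; rewrite !mxE eq_sym rmorph_nat.
by rewrite mul_rowsub_mx mul1mx mxE.
Qed.

Lemma embedmx_isometry : adj E *m E = 1%:M.
Proof. by apply/matrixP=> u v; rewrite adj_embedmx_mulE !mxE (inj_eq compress_index_inj). Qed.

Lemma adj_embedmx_compl : adj E *m (1%:M - E *m adj E) = 0.
Proof. by rewrite mulmxBr mulmx1 mulmxA embedmx_isometry mul1mx subrr. Qed.

Hypothesis m_gt1 : (1 < m)%N.

Lemma SN_le_mul_adj_tens p1 p2 (H : 'M[C]_(a * b, p1 * p2))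
    (A : 'M[C]_(m, p1)) (B : 'M[C]_(b, p2)) :
  adj E *m H = A *t B -> SN_le (H *m adj H) a.-1.
Proof.
move=> EH; apply: SN_le_mul_adj => j; case: (mxtens_indexP j) => j1 j2.
have colH s l : col (mxtens_index (j1, j2)) H (mxtens_index (kappa s, l)) 0 = A s j1 * B l j2.
  by rewrite -tensmxE -EH adj_embedmx_mulE /compress_index mxtens_indexK !mxE.
have k01 : kappa (Ordinal (ltnW m_gt1)) != kappa (Ordinal m_gt1) by rewrite (inj_eq kappa_inj).
exact: schmidt_rank_le_pred k01 (colH _) (colH _).
Qed.

Lemma SN_le_congr_separable (M : 'M[C]_(a * b, m * b)) (Y : 'M[C]_(m * b)) :
  separable Y -> adj E *m M = 1%:M -> SN_le (M *m Y *m adj M) a.-1.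
Proof.
move=> [N [P [Q [psdPQ ->]]]] EM; rewrite mulmx_sumr mulmx_suml; apply: SN_le_sum => i _.
have [A ->] := psd_factor (psdPQ i).1; have [B ->] := psd_factor (psdPQ i).2.
have -> : M *m ((A *m adj A) *t (B *m adj B)) *m adj M = M *m (A *t B) *m adj (M *m (A *t B)).
  by rewrite adjM adj_tens -tensmx_mul !mulmxA.
by apply: (SN_le_mul_adj_tens (A := A) (B := B)); rewrite mulmxA EM mul1mx.
Qed.

Lemma SN_le_congr_psd (M X : 'M[C]_(a * b)) :
  psd X -> adj E *m M = 0 -> SN_le (M *m X *m adj M) a.-1.
Proof.
move=> /psd_factor[W ->] EM0.
have -> : M *m (W *m adj W) *m adj M = M *m W *m adj (M *m W) by rewrite adjM !mulmxA.
apply: (SN_le_mul_adj_tens (A := 0 : 'M_(m, a)) (B := 0 : 'M_(b, b))).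
by rewrite mulmxA EM0 mul0mx tens0mx.
Qed.

Lemma SN_le_of_separable_compression (X : 'M[C]_(a * b)) :
  psd X -> separable (adj E *m X *m E) -> SN_le X a.-1.
Proof.
move=> psdX sepY; have [Yp [Yp_herm YYpY]] := hermitian_ginv (psd_congr E psdX).1.
have GY : X *m E *m Yp *m (adj E *m X *m E) = X *m E.
  set Y := adj E *m X *m E in YYpY *.
  have : adj (E *m (1%:M - Yp *m Y)) *m X *m (E *m (1%:M - Yp *m Y)) = 0.
    have -> : adj (E *m (1%:M - Yp *m Y)) *m X *m (E *m (1%:M - Yp *m Y))
              = adj (1%:M - Yp *m Y) *m (Y *m (1%:M - Yp *m Y)) by rewrite adjM !mulmxA.
    by rewrite mulmxBr mulmx1 (mulmxA Y) YYpY subrr mulmx0.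
  move/(psd_mul_eq0 psdX); rewrite mulmxA mulmxBr mulmx1 => /subr0_eq.
  by rewrite !mulmxA.
rewrite (schur_decomposition (esym psdX.1) Yp_herm GY).
apply: SN_leD; [apply: SN_le_congr_separable sepY _ | apply: SN_le_congr_psd psdX _].
- by rewrite mulmxDr embedmx_isometry mulmxA adj_embedmx_compl mul0mx addr0.
- by rewrite mulmxA adj_embedmx_compl mul0mx.
Qed.

End Compression.

Definition pair_index d (k1 k2 : 'I_d) (s : 'I_2) : 'I_d :=
  if val s == 0%N then k1 else k2.

Lemma pair_index_inj d (k1 k2 : 'I_d) : k1 != k2 -> injective (pair_index k1 k2).
Proof.
rewrite /pair_index => k12 [[|[|//]] ?] [[|[|//]] ?] /= eqk; try exact: val_inj.
all: by move: k12; rewrite eqk eqxx.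
Qed.

Lemma block2E (R : realType) d1 d2 (X : 'M[R[i]]_(d1 * d2)) (k1 k2 : 'I_d1) :
  block2 X k1 k2
  = adj (embedmx R d2 (pair_index k1 k2)) *m X *m embedmx R d2 (pair_index k1 k2).
Proof. by apply/matrixP=> u v; rewrite mul_embedmxE adj_embedmx_mulE mxE. Qed.

Theorem corollary19 (R : realType) (d1 d2 : nat) (X : 'M[R[i]]_(d1 * d2)) :
  (2 <= d1)%N -> (d1 <= d2)%N ->
  psd X -> SN_eq X d1 ->
  exists k1 k2 : 'I_d1, k1 != k2 /\ entangled (block2 X k1 k2).
Proof.
move=> d1_ge2 _ psdX [_ _ SN_min].
pose k1 : 'I_d1 := Ordinal (ltnW d1_ge2); pose k2 : 'I_d1 := Ordinal d1_ge2.
have k12 : k1 != k2 by [].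
exists k1, k2; split=> //; rewrite block2E; split; first exact: psd_congr.
move/(SN_le_of_separable_compression (pair_index_inj k12) (isT : (1 < 2)%N) psdX).
by move/SN_min; rewrite leqNgt ltn_predL (ltnW d1_ge2).
Qed.
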